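(* It is not true that $\lim_{n\to\infty} M(n+1)/M(n) = 2$.
   Context: For a positive integer $n$, $M(n)$ denotes the number of permutations $(t_1,\dots,t_n)$ of $\{1,2,\ldots,n\}$ that do not contain a 3-term arithmetic progression as a subsequence. Here a sequence contains a 3-term arithmetic progression as a subsequence if there are indices $i<j<k$ with $t_j - t_i = t_k - t_j \neq 0$; the common difference may be positive or negative. *)

From HB Require Import structures.
From mathcomp Require Import all_boot all_order all_algebra.
Set Implicit Arguments. Unset Strict Implicit. Unset Printing Implicit Defensive.
Import GRing.Theory Num.Theory.

Definition has3AP (s : seq nat) : bool :=
  [exists i : 'I_(size s), exists j : 'I_(size s), exists k : 'I_(size s),
     [&& (i < j)%N, (j < k)%N,
         ((nth 0%N s j)%:Z - (nth 0%N s i)%:Z == (nth 0%N s k)%:Z - (nth 0%N s j)%:Z)%R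
       & ((nth 0%N s j)%:Z - (nth 0%N s i)%:Z != 0)%R]].

(* M n = number of permutations of {1,...,n} with no 3-term AP subsequence.
   [permutations s] is the duplicate-free list of all permutations of s. *)
Definition M (n : nat) : nat :=
  count (fun s => ~~ has3AP s) (permutations (iota 1 n)).

(* If a and b are arrangements of {1..n} without 3-term progressions, so are
   (2a-1 ++ 2b) and (2b ++ 2a-1) as arrangements of {1..2n}: the endpoints of a
   progression have equal parity, hence the whole progression lies in one half,
   where it pulls back along an affine map.  Thus M(2n) >= 2 M(n)^2, so with
   M(4) = 10 the values 2 M(4 2^k) >= 20^(2^k) grow like (20^(1/4))^n with
   20^(1/4) > 2.  A ratio limit l, on the other hand, bounds M(n) by C r^n for
   every r > l; comparing the two gives 2 M(4) <= l^4, which fails for l = 2. *)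

From Stdlib Require Import Reals Lra.
From mathcomp Require Import all_boot all_algebra zify.
Set Implicit Arguments. Unset Strict Implicit. Unset Printing Implicit Defensive.
Import GRing.Theory.

Definition ap3 (x y z : nat) := (x + z == y + y) && (x != y).

Lemma ap3_int (x y z : nat) :
  ((y%:Z - x%:Z == z%:Z - y%:Z) && (y%:Z - x%:Z != 0))%R = ap3 x y z.
Proof.
rewrite /ap3 subr_eq0 eqz_nat [y == x]eq_sym; congr (_ && _).
by apply/eqP/eqP; lia.
Qed.

Lemma has3APP s :
  reflect (exists i j k, [/\ i < j < k, k < size s & ap3 (nth 0 s i) (nth 0 s j) (nth 0 s k)])
          (has3AP s).
Proof.
apply: (iffP existsP) => [[i /existsP [j /existsP [k]]] | [i [j [k [/andP [ij jk] k_lt ap]]]]].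
  rewrite andbA ap3_int => /andP [ijk ap].
  by exists i, j, k; rewrite ijk ltn_ord.
have j_lt := ltn_trans jk k_lt; have i_lt := ltn_trans ij j_lt.
exists (Ordinal i_lt); apply/existsP; exists (Ordinal j_lt); apply/existsP.
by exists (Ordinal k_lt); rewrite /= andbA ap3_int ij jk.
Qed.

(* Unlike [has3AP], this form is evaluated by [vm_compute]. *)
Lemma has3APE s : has3AP s =
  has (fun i => has (fun j => has (fun k =>
         [&& i < j < k & ap3 (nth 0 s i) (nth 0 s j) (nth 0 s k)])
       (iota 0 (size s))) (iota 0 (size s))) (iota 0 (size s)).
Proof.
apply/has3APP/hasP => [[i [j [k [ijk k_lt ap]]]] | [i _ /hasP [j _ /hasP [k]]]].
  have /andP [ij jk] := ijk; have j_lt := ltn_trans jk k_lt.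
  exists i; first by rewrite mem_iota (ltn_trans ij j_lt).
  apply/hasP; exists j; first by rewrite mem_iota.
  by apply/hasP; exists k; rewrite ?mem_iota ?ijk.
by rewrite mem_iota => /= k_lt /andP [ijk ap]; exists i, j, k.
Qed.

Lemma M4 : M 4 = 10.
Proof. by rewrite /M (eq_count (fun s => congr1 negb (has3APE s))); vm_compute. Qed.

Lemma has3AP_map f s : injective f ->
    (forall x y z, f x + f z = f y + f y -> x + z = y + y) ->
  has3AP (map f s) -> has3AP s.
Proof.
move=> f_inj f_mid /has3APP [i [j [k [ijk]]]]; rewrite size_map => k_lt.
have /andP [ij jk] := ijk; have j_lt := ltn_trans jk k_lt; have i_lt := ltn_trans ij j_lt.
rewrite /ap3 !(nth_map 0) // (inj_eq f_inj) => /andP [/eqP /f_mid mid neq].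
by apply/has3APP; exists i, j, k; rewrite /ap3 mid eqxx.
Qed.

Lemma ap3_odd x y z : ap3 x y z -> odd x = odd z.
Proof.
case/andP => /eqP /(congr1 odd) + _; rewrite !oddD addbb.
by case: (odd x); case: (odd z).
Qed.

Lemma has3AP_cat_parity (b : bool) (u v : seq nat) :
    {in u, forall x, odd x = b} -> {in v, forall x, odd x = ~~ b} ->
  has3AP (u ++ v) -> has3AP u || has3AP v.
Proof.
move=> u_b v_b /has3APP [i [j [k [ijk]]]]; rewrite size_cat => k_lt.
have /andP [ij jk] := ijk.
have nth_parity m : m < size u + size v ->
    odd (nth 0 (u ++ v) m) = if m < size u then b else ~~ b.
  move=> m_lt; rewrite nth_cat; case: ltnP => m_u.
    exact/u_b/mem_nth.
  by apply/v_b/mem_nth; rewrite ltn_subLR.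
move=> ap; have := ap3_odd ap.
rewrite !nth_parity ?(ltn_trans ij (ltn_trans jk k_lt)) //.
have [k_u | u_k] := ltnP k (size u); case: ltnP => [i_u | u_i]; try by case: (b).
  have j_u := ltn_trans jk k_u.
  move=> _; apply/orP; left; apply/has3APP; exists i, j, k.
  by rewrite !nth_cat i_u j_u k_u in ap.
have u_j := leq_trans u_i (ltnW ij).
move=> _; apply/orP; right; apply/has3APP.
exists (i - size u), (j - size u), (k - size u).
rewrite !nth_cat !ltnNge u_i u_j u_k /= in ap; split => //; first lia.
by rewrite ltn_subLR.
Qed.

Lemma perm_iota_odd_even n :
  perm_eq ([seq x.*2.-1 | x <- iota 1 n] ++ [seq x.*2 | x <- iota 1 n]) (iota 1 n.*2).
Proof.
elim: n => [// | n IHn].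
have -> : iota 1 n.+1 = iota 1 n ++ [:: n.+1] by rewrite -[n.+1]addn1 iotaD addn1.
rewrite doubleS.
have -> : iota 1 n.*2.+2 = iota 1 n.*2 ++ [:: n.*2.+1; n.*2.+2].
  by rewrite -[n.*2.+2]addn2 iotaD addn2.
rewrite !map_cat; apply: perm_trans (perm_cat IHn (perm_refl _)).
by rewrite -!catA perm_cat2l -cat1s perm_catCA.
Qed.

Definition apfree n := [seq s <- permutations (iota 1 n) | ~~ has3AP s].

Lemma size_apfree n : size (apfree n) = M n.
Proof. by rewrite size_filter. Qed.

Lemma mem_apfree n s : (s \in apfree n) = perm_eq s (iota 1 n) && ~~ has3AP s.
Proof. by rewrite mem_filter mem_permutations andbC. Qed.

Lemma apfree_uniq n : uniq (apfree n).
Proof. exact/filter_uniq/permutations_uniq. Qed.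

Lemma size_apfree_mem n s : s \in apfree n -> size s = n.
Proof. by rewrite mem_apfree => /andP [/perm_size -> _]; rewrite size_iota. Qed.

Lemma apfree_gt0 n s x : s \in apfree n -> x \in s -> 0 < x.
Proof. by rewrite mem_apfree => /andP [/perm_mem -> _]; rewrite mem_iota => /andP []. Qed.

Lemma has3AP_dilate_odd s : has3AP [seq x.*2.-1 | x <- s] -> has3AP s.
Proof. by apply: has3AP_map => [x y | x y z]; lia. Qed.

Lemma has3AP_dilate_even s : has3AP [seq x.*2 | x <- s] -> has3AP s.
Proof. by apply: has3AP_map => [x y | x y z]; lia. Qed.

Section Splice.

Variables (n : nat) (a b : seq nat).
Hypotheses (a_free : a \in apfree n) (b_free : b \in apfree n).

Let a_noAP : ~~ has3AP a. Proof. by move: a_free; rewrite mem_apfree => /andP []. Qed.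
Let b_noAP : ~~ has3AP b. Proof. by move: b_free; rewrite mem_apfree => /andP []. Qed.

Let odd_a : {in [seq x.*2.-1 | x <- a], forall y, odd y = true}.
Proof.
move=> _ /mapP [x /(apfree_gt0 a_free) x_gt0 ->].
by case: x x_gt0 => // x _; rewrite doubleS /= odd_double.
Qed.

Let even_b : {in [seq x.*2 | x <- b], forall y, odd y = ~~ true}.
Proof. by move=> _ /mapP [x _ ->]; rewrite odd_double. Qed.

Let perm_splice :
  perm_eq ([seq x.*2.-1 | x <- a] ++ [seq x.*2 | x <- b]) (iota 1 n.*2).
Proof.
move: a_free b_free; rewrite !mem_apfree => /andP [pa _] /andP [pb _].
exact/(perm_trans _ (perm_iota_odd_even n))/perm_cat/perm_map/pb/perm_map.
Qed.

Lemma apfree_splice_odd_even :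
  [seq x.*2.-1 | x <- a] ++ [seq x.*2 | x <- b] \in apfree n.*2.
Proof.
rewrite mem_apfree perm_splice; apply/negP => /(has3AP_cat_parity odd_a even_b).
by case/orP => [/has3AP_dilate_odd | /has3AP_dilate_even]; apply/negP.
Qed.

Lemma apfree_splice_even_odd :
  [seq x.*2 | x <- b] ++ [seq x.*2.-1 | x <- a] \in apfree n.*2.
Proof.
rewrite mem_apfree perm_catC perm_splice; apply/negP.
have odd_b : {in [seq x.*2 | x <- b], forall y, odd y = false} by exact: even_b.
have even_a : {in [seq x.*2.-1 | x <- a], forall y, odd y = ~~ false} by exact: odd_a.
move=> /(has3AP_cat_parity odd_b even_a).
by case/orP => [/has3AP_dilate_even | /has3AP_dilate_odd]; apply/negP.
Qed.

End Splice.

Lemma eq_cat_map (S T : eqType) (f g : S -> T) (s1 s2 t1 t2 : seq S) :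
    injective f -> injective g -> size s1 = size s2 -> map f s1 ++ map g t1 = map f s2 ++ map g t2 ->
  s1 = s2 /\ t1 = t2.
Proof.
move=> f_inj g_inj eq_size /eqP; rewrite eqseq_cat ?size_map //.
by case/andP => /eqP /(inj_map f_inj) -> /eqP /(inj_map g_inj) ->.
Qed.

Lemma M_double_ge n : 0 < n -> 2 * M n ^ 2 <= M n.*2.
Proof.
move=> n_gt0; set A := apfree n.
pose oe := [seq [seq x.*2.-1 | x <- a] ++ [seq x.*2 | x <- b] | a <- A, b <- A].
pose eo := [seq [seq x.*2 | x <- b] ++ [seq x.*2.-1 | x <- a] | a <- A, b <- A].
have odd_inj : injective (fun x => x.*2.-1) by move=> x y; lia.
have head_odd a b : a \in A -> b \in A ->
    odd (head 0 ([seq x.*2.-1 | x <- a] ++ [seq x.*2 | x <- b])).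
  move=> a_free _; case: a a_free => [/size_apfree_mem n0 | x a a_free] /=.
    by rewrite -n0 in n_gt0.
  have := apfree_gt0 a_free (mem_head x a).
  by case: x {a_free} => // x _; rewrite doubleS /= odd_double.
have head_even a b : a \in A -> b \in A ->
    ~~ odd (head 0 ([seq x.*2 | x <- b] ++ [seq x.*2.-1 | x <- a])).
  move=> _ b_free; case: b b_free => [/size_apfree_mem n0 | x b _] /=.
    by rewrite -n0 in n_gt0.
  by rewrite odd_double.
have -> : 2 * M n ^ 2 = size (oe ++ eo).
  by rewrite size_cat !size_allpairs size_apfree mul2n -addnn mulnn.
rewrite -size_apfree; apply: uniq_leq_size.
  rewrite cat_uniq; apply/and3P; split.
  - apply: allpairs_uniq (apfree_uniq n) (apfree_uniq n) _.
    move=> [a b] [a' b'] /allpairsP [[? ?] [a_free _ [-> _]]].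
    move=> /allpairsP [[? ?] [a'_free _ [-> _]]] /=.
    move/(eq_cat_map odd_inj double_inj).
    by rewrite (size_apfree_mem a_free) (size_apfree_mem a'_free) => /(_ erefl) [-> ->].
  - apply/hasPn => _ /allpairsP [[a b] [a_free b_free ->]] /=; apply/negP.
    case/allpairsP => [[a' b'] [a'_free b'_free /= /(congr1 (fun s => odd (head 0 s)))]].
    by rewrite (negbTE (head_even _ _ a_free b_free)) head_odd.
  - apply: allpairs_uniq (apfree_uniq n) (apfree_uniq n) _.
    move=> [a b] [a' b'] /allpairsP [[? ?] [_ b_free [_ ->]]].
    move=> /allpairsP [[? ?] [_ b'_free [_ ->]]] /=.
    move/(eq_cat_map double_inj odd_inj).
    by rewrite (size_apfree_mem b_free) (size_apfree_mem b'_free) => /(_ erefl) [-> ->].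
move=> s; rewrite mem_cat => /orP [] /allpairsP [[a b] [a_free b_free ->]] /=.
  exact: apfree_splice_odd_even.
exact: apfree_splice_even_odd.
Qed.

Open Scope R_scope.

Lemma pow_lt_pow_l (x y : R) (n : nat) : 0 < x < y -> (0 < n)%nat -> x ^ n < y ^ n.
Proof.
move=> xy n_gt0; rewrite -!Rpower_pow; try lra.
by apply: Rlt_Rpower_l => //; apply: lt_0_INR; apply/ltP.
Qed.

Lemma exists_between_pow (l y : R) (n : nat) :
  0 < l -> (0 < n)%nat -> l ^ n < y -> exists r, l < r /\ r ^ n < y.
Proof.
move=> l_gt0 n_gt0 ly.
have y_gt0 : 0 < y by have := pow_lt l n l_gt0; lra.
have n_neq0 : INR n <> 0 by apply: not_0_INR; lia.
set rho := Rpower y (/ INR n).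
have rho_gt0 : 0 < rho by apply: exp_pos.
have rho_n : rho ^ n = y by rewrite -Rpower_pow // Rpower_mult Rinv_l // Rpower_1.
have l_rho : l < rho.
  by apply: Rnot_le_lt => rho_l; have := pow_incr rho l n; rewrite rho_n; lra.
exists ((l + rho) / 2); split; first lra.
by rewrite -rho_n; apply: pow_lt_pow_l => //; lra.
Qed.

Lemma ratio_cv_geometric_bound (u : nat -> R) (l r : R) :
    (forall n, 0 <= u n) -> 0 < l < r -> Un_cv (fun n => u n.+1 / u n) l ->
  exists N C, forall n, (N <= n)%nat -> u n <= C * r ^ n.
Proof.
move=> u_ge0 lr /(_ (Rmin l (r - l))) [|N cvN]; first by apply: Rmin_pos; lra.
have step n : (N <= n)%nat -> u n.+1 <= r * u n.
  move=> /leP /cvN; rewrite /R_dist => /Rabs_def2 [ratio_lt ratio_gt].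
  have := Rmin_l l (r - l); have := Rmin_r l (r - l).
  (* A zero denominator would make the ratio [0] (as [/ 0 = 0]), which is not near [l]. *)
  have [un0 | un_neq0] := Req_dec (u n) 0.
    by rewrite un0 /Rdiv Rinv_0 Rmult_0_r in ratio_gt; lra.
  have un_gt0 : 0 < u n by have := u_ge0 n; lra.
  have -> : u n.+1 = u n.+1 / u n * u n by field.
  by move=> *; apply: Rmult_le_compat_r; lra.
have r_gt0 : 0 < r by lra.
exists N, (u N / r ^ N) => n /subnKC <-; elim: (n - N)%nat => [| m IHm].
  by rewrite addn0; apply: Req_le; field; apply: pow_nonzero; lra.
rewrite addnS /=; apply: Rle_trans (step _ (leq_addr _ _)) _.
by rewrite -Rmult_assoc [_ * r]Rmult_comm Rmult_assoc; apply: Rmult_le_compat_l; lra.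
Qed.

Lemma doubling_pow2_lower_bound (v : nat -> R) (n0 : nat) :
    (forall n, (0 < n)%nat -> v n ^ 2 <= v (n + n)%nat) -> (0 < n0)%nat -> 0 <= v n0 ->
  forall k, v n0 ^ (2 ^ k) <= v (n0 * 2 ^ k)%nat.
Proof.
move=> v_sq n0_gt0 v_ge0; elim=> [| k IHk]; first by rewrite muln1 pow_1; lra.
rewrite expnSr pow_mult mulnA muln2 -addnn.
apply: Rle_trans (v_sq _ _); last by rewrite muln_gt0 n0_gt0 expn_gt0.
by apply: pow_incr; split => //; apply: pow_le.
Qed.

Lemma pow_gap_unbounded (s y D : R) :
  0 < s < y -> exists m0, forall m, (m0 <= m)%nat -> D * s ^ m < y ^ m.
Proof.
move=> sy; set q := y / s.
have q_gt1 : 1 < q.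
  rewrite /q -(Rinv_r s); last by lra.
  by apply: Rmult_lt_compat_r; [apply: Rinv_0_lt_compat |]; lra.
have [m0 m0_gt] := INR_archimed (q - 1) D ltac:(lra).
exists m0 => m /leP /le_INR m0m.
have bernoulli := Rfunctions.poly m (q - 1) ltac:(lra); rewrite Rplus_minus in bernoulli.
have -> : y ^ m = q ^ m * s ^ m by rewrite -Rpow_mult_distr /q; congr (_ ^ _); field; lra.
have D_lt : D < q ^ m by have := Rmult_le_compat_r (q - 1) _ _ ltac:(lra) m0m; lra.
by apply: Rmult_lt_compat_r => //; apply: pow_lt; lra.
Qed.

Lemma ratio_limit_pow_ge (u : nat -> R) (c l : R) (n0 : nat) :
    (forall n, 0 <= u n) -> 0 < c ->
    (forall n, (0 < n)%nat -> c * u n ^ 2 <= u (n + n)%nat) -> (0 < n0)%nat -> 0 < l -> Un_cv (fun n => u n.+1 / u n) l ->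
  c * u n0 <= l ^ n0.
Proof.
move=> u_ge0 c_gt0 u_sq n0_gt0 l_gt0 cv; apply: Rnot_lt_le => l_lt.
have [r [lr r_lt]] := exists_between_pow l_gt0 n0_gt0 l_lt.
have [N [C u_le]] := ratio_cv_geometric_bound u_ge0 (conj l_gt0 lr) cv.
have rn0_gt0 : 0 < r ^ n0 by apply: pow_lt; lra.
have [m0 gap] := pow_gap_unbounded (c * C) (conj rn0_gt0 r_lt).
have cu_sq n : (0 < n)%nat -> (c * u n) ^ 2 <= c * u (n + n)%nat.
  move=> n_gt0; have -> : (c * u n) ^ 2 = c * (c * u n ^ 2) by ring.
  by apply: Rmult_le_compat_l; [lra | apply: u_sq].
have cu_ge0 : 0 <= c * u n0 by apply: Rmult_le_pos; [lra | apply: u_ge0].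
set k := maxn m0 N; have k_le : (k <= 2 ^ k)%nat by apply/ltnW/ltn_expl.
have lower := doubling_pow2_lower_bound (v := fun n => c * u n) cu_sq n0_gt0 cu_ge0 k.
have upper := u_le (n0 * 2 ^ k)%nat
  (leq_trans (leq_trans (leq_maxr m0 N) k_le) (leq_pmull _ n0_gt0)).
rewrite pow_mult in upper.
have := gap (2 ^ k)%nat (leq_trans (leq_maxl m0 N) k_le).
have := Rmult_le_compat_l c _ _ (Rlt_le _ _ c_gt0) upper; lra.
Qed.

Lemma M_double_ge_R n : (0 < n)%nat -> 2 * INR (M n) ^ 2 <= INR (M (n + n)).
Proof.
move=> /M_double_ge; rewrite -mulnn addnn => /leP /le_INR.
by rewrite !mult_INR /=; lra.
Qed.

Theorem mainTheorem2 :
  ~ Un_cv (fun n : nat => INR (M (S n)) / INR (M n)) 2.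
Proof.
move=> cv.
have := ratio_limit_pow_ge (n0 := 4) (fun n => pos_INR (M n)) Rlt_0_2 M_double_ge_R isT Rlt_0_2 cv.
by rewrite M4 /=; lra.
Qed.
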